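(* Let $G=(V,E)$ be a connected simple finite graph with at least two vertices and let $p\in(0,\infty)$. There exists $f:V\to[0,\infty)$ with ${\rm Var}_p f>0$ such that $$\frac{{\rm Var}_p M_Gf}{{\rm Var}_p f}=\mathbf{C}_{G,p}.$$
   Context: For a finite connected graph $G=(V,E)$ with graph distance $d_G$ and $f:V\to\mathbb{R}$, $M_Gf(v)=\sup_{r\geq 0}\frac{1}{|B(v,r)|}\sum_{u\in B(v,r)}|f(u)|$, where $B(v,r)=\{u\in V: d_G(u,v)\le r\}$. For $g:V\to\mathbb{R}$ and $p>0$, ${\rm Var}_p g=\left(\sum_{\{v_1,v_2\}\in E}|g(v_1)-g(v_2)|^p\right)^{1/p}$, and $\mathbf{C}_{G,p}=\sup\{{\rm Var}_pM_Gf/{\rm Var}_pf:\ f:V\to\mathbb{R},\ {\rm Var}_pf>0\}$. *)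

From HB Require Import structures.
From mathcomp Require Import all_boot all_order all_algebra.
From mathcomp Require Import all_classical all_reals all_analysis.
Set Implicit Arguments. Unset Strict Implicit. Unset Printing Implicit Defensive.
Import Order.TTheory GRing.Theory Num.Theory.
Local Open Scope ring_scope.

Definition simple_graph (T : finType) (e : rel T) : Prop :=
  symmetric e /\ irreflexive e.

Definition connected_graph (T : finType) (e : rel T) : Prop :=
  forall x y : T, connect e x y.

(* u lies in the closed ball B(v,r) iff d_G(u,v) <= r, i.e. there is an
   e-path from v to u with at most r edges. *)
Definition in_ball (R : realType) (T : finType) (e : rel T) (v : T) (r : R)
  (u : T) : Prop :=
  exists s : seq T, [/\ path e v s, last v s = u & (size s)%:R <= r].

Definition ball_set (R : realType) (T : finType) (e : rel T) (v : T) (r : R)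
  : {set T} := [set u | `[< in_ball e v r u >] ].

Definition ball_avg (R : realType) (T : finType) (e : rel T) (f : T -> R)
  (v : T) (r : R) : R :=
  (#|ball_set e v r|%:R)^-1 * \sum_(u in ball_set e v r) `|f u|.

Definition maxfun (R : realType) (T : finType) (e : rel T) (f : T -> R)
  (v : T) : R :=
  sup [set ball_avg e f v r | r in [set r : R | 0 <= r]].

Definition is_edge (T : finType) (e : rel T) (S : {set T}) : bool :=
  [exists x, exists y, (S == [set x; y]) && e x y].

(* Var_p g = (sum_{{v1,v2} in E} |g v1 - g v2|^p)^(1/p) ; an edge S
   = {x,y} contributes |g x - g y|^p, written as (max_S g - min_S g)^p. *)
Definition edge_diff (R : realType) (T : finType) (g : T -> R) (S : {set T})
  : R :=
  \big[Order.max/0]_(x in S) \big[Order.max/0]_(y in S) `|g x - g y|.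

Definition Varp (R : realType) (T : finType) (e : rel T) (p : R) (g : T -> R)
  : R :=
  (\sum_(S : {set T} | is_edge e S) (edge_diff g S) `^ p) `^ p^-1.

(* C_{G,p} as an extended real (a priori possibly +oo) *)
Definition CGp (R : realType) (T : finType) (e : rel T) (p : R) : \bar R :=
  ereal_sup [set ((Varp e p (maxfun e f)) / (Varp e p f))%:E
            | f in [set f : T -> R | 0 < Varp e p f]].

(* On a finite graph, M_G f (v) is the largest of the finitely many averages of |f| over the
   balls around v.  Hence M_G commutes with f |-> k f + c for k, c >= 0 and with f |-> |f|, and
   f |-> Var_p (M_G f) is continuous on R^V.  Since Var_p is invariant under adding constants,
   positively homogeneous and not increased by taking absolute values, replacing f by
   (|f| - min |f|) / Var_p |f| never decreases the ratio.  These normalised functions vanish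
   somewhere and have Var_p = 1, so on a connected graph they take values in [0, |V|]: they form
   a compact subset of R^V on which Var_p (M_G f) attains its maximum.  When Var_p |f| = 0,
   |f| is constant and so is M_G f, so the ratio is 0. *)

From HB Require Import structures.
From mathcomp Require Import all_boot all_order all_algebra.
From mathcomp Require Import all_classical all_reals all_analysis.
From mathcomp Require Import lra.
Set Implicit Arguments. Unset Strict Implicit. Unset Printing Implicit Defensive.
Import Order.TTheory GRing.Theory Num.Theory.
Import numFieldTopology.Exports numFieldNormedType.Exports.
Local Open Scope classical_set_scope.
Local Open Scope ring_scope.

Section RealContinuity.
Variables (R : realType) (X : topologicalType).

Lemma continuous_sumr (I : Type) (s : seq I) (P : pred I) (F : I -> X -> R) :
  (forall i, continuous (F i)) ->
  continuous (fun x => \sum_(i <- s | P i) F i x).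
Proof.
by move=> cF; apply: continuous_big => [|i _]; [exact: add_continuous|exact: cF].
Qed.

Lemma continuous_bigmax (I : Type) (s : seq I) (P : pred I) (F : I -> X -> R) :
  (forall i, continuous (F i)) ->
  continuous (fun x => \big[Order.max/0]_(i <- s | P i) F i x).
Proof.
by move=> cF; apply: continuous_big => [|i _]; [exact: max_continuous|exact: cF].
Qed.

Lemma continuousMl (c : R) (F : X -> R) :
  continuous F -> continuous (fun x => c * F x).
Proof. by move=> cF x; apply: cvgMl_tmp; exact: cF. Qed.

Lemma continuous_normr_powR (q : R) : 0 < q -> continuous (fun a : R => `|a| `^ q).
Proof.
move=> q0 a; have [->|a0] := eqVneq a 0.
  apply/cvgrPdist_le => eps eps0 /=; near=> x.
  rewrite normr0 powR0 ?gt_eqF// sub0r normrN ger0_norm ?powR_ge0//.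
  have -> : eps = (eps `^ q^-1) `^ q.
    by rewrite -powRrM mulVf ?gt_eqF// powRr1 ?(ltW eps0).
  apply: ge0_ler_powR; rewrite ?nnegrE ?powR_ge0 ?(ltW q0)//.
  apply: ltW; near: x; exists (eps `^ q^-1); first by rewrite /= powR_gt0.
  by move=> y /=; rewrite sub0r normrN.
have na0 : 0 < `|a| by rewrite normr_gt0.
have cn : {for a, continuous (fun x : R => `|x|)} := @norm_continuous _ R^o a.
have cp : {for `|a|, continuous (@powR R ^~ q)}.
  apply: differentiable_continuous; apply/derivable1_diffP.
  by apply: derivable_powR; rewrite in_itv /= na0.
exact: (continuous_comp cn cp).
Unshelve. all: end_near. Qed.

End RealContinuity.

Section MaximalFunction.
Variables (R : realType) (T : finType) (e : rel T).

Definition balls (v : T) : {set {set T}} :=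
  [set B | `[< exists2 r : R, 0 <= r & ball_set e v r = B >]].

Definition avg (f : T -> R) (B : {set T}) : R := #|B|%:R^-1 * \sum_(u in B) `|f u|.

Lemma ball_set_center v (r : R) : 0 <= r -> v \in ball_set e v r.
Proof. by move=> r0; rewrite inE; apply/asboolP; exists [::]. Qed.

Lemma ball_set_in_balls v (r : R) : 0 <= r -> ball_set e v r \in balls v.
Proof. by move=> r0; rewrite inE; apply/asboolP; exists r. Qed.

Lemma bigmax_avg_balls (f : T -> R) v : exists2 r0 : R, 0 <= r0 &
  \big[Order.max/0]_(B in balls v) avg f B = ball_avg e f v r0.
Proof.
have avg_ge0 B : 0 <= avg f B by rewrite mulr_ge0 ?invr_ge0 ?sumr_ge0.
have [B0] := eq_bigmax _ _ (avg f) (ball_set_in_balls v (lexx (0 : R)))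
  (fun B _ => avg_ge0 B).
by rewrite !inE => -[r0 r0_ge0 <-] ->; exists r0.
Qed.

Lemma ball_avg_le_bigmax (f : T -> R) v (r : R) : 0 <= r ->
  ball_avg e f v r <= \big[Order.max/0]_(B in balls v) avg f B.
Proof. by move=> r0; exact: (le_bigmax_cond _ _ (ball_set_in_balls v r0)). Qed.

Lemma maxfun_attained (f : T -> R) v (r0 : R) : 0 <= r0 ->
  (forall r, 0 <= r -> ball_avg e f v r <= ball_avg e f v r0) ->
  maxfun e f v = ball_avg e f v r0.
Proof.
move=> r0_ge0 r0_max; apply/le_anti/andP; split.
  apply: ge_sup; first by exists (ball_avg e f v r0), r0.
  by move=> _ [r r_ge0 <-]; apply: r0_max.
apply: ub_le_sup; last by exists r0.
by exists (ball_avg e f v r0) => _ [r r_ge0 <-]; apply: r0_max.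
Qed.

Lemma ball_avg_argmax (f : T -> R) v : exists2 r0 : R, 0 <= r0 &
  forall r, 0 <= r -> ball_avg e f v r <= ball_avg e f v r0.
Proof.
have [r0 r0_ge0 r0E] := bigmax_avg_balls f v.
by exists r0 => // r r_ge0; rewrite -r0E ball_avg_le_bigmax.
Qed.

Lemma maxfun_bigmax (f : T -> R) v :
  maxfun e f v = \big[Order.max/0]_(B in balls v) avg f B.
Proof.
have [r0 r0_ge0 r0E] := bigmax_avg_balls f v.
by rewrite r0E; apply: maxfun_attained => // r r_ge0; rewrite -r0E ball_avg_le_bigmax.
Qed.

Lemma ball_avg_affine (f : T -> R) (k c : R) v (r : R) :
  (forall u, 0 <= f u) -> 0 <= k -> 0 <= c -> 0 <= r ->
  ball_avg e (fun u => k * f u + c) v r = k * ball_avg e f v r + c.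
Proof.
move=> f_ge0 k_ge0 c_ge0 r_ge0; rewrite /ball_avg.
have card_neq0 : #|ball_set e v r|%:R != 0 :> R.
  by rewrite pnatr_eq0 -lt0n; apply/card_gt0P; exists v; apply: ball_set_center.
under eq_bigr do rewrite ger0_norm ?addr_ge0 ?mulr_ge0//.
under [X in _ = k * (_ * X) + _]eq_bigr do rewrite ger0_norm//.
rewrite big_split /= sumr_const -mulr_sumr mulrDr mulrCA; congr (_ + _).
by rewrite -[c *+ _]mulr_natr mulrCA mulVf // mulr1.
Qed.

Lemma maxfun_affine (f : T -> R) (k c : R) v :
  (forall u, 0 <= f u) -> 0 <= k -> 0 <= c ->
  maxfun e (fun u => k * f u + c) v = k * maxfun e f v + c.
Proof.
move=> f_ge0 k_ge0 c_ge0; have [r0 r0_ge0 r0_max] := ball_avg_argmax f v.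
rewrite (maxfun_attained r0_ge0 r0_max).
rewrite (maxfun_attained (f := fun u => k * f u + c) r0_ge0) ?ball_avg_affine//.
by move=> r r_ge0; rewrite !ball_avg_affine// lerD2r ler_wpM2l// r0_max.
Qed.

Lemma maxfun_cst (c : R) : 0 <= c -> maxfun e (fun _ => c) = fun _ => c.
Proof.
move=> c_ge0; apply: funext => v.
have := @maxfun_affine (fun _ => 0) 0 c v (fun _ => lexx 0) (lexx 0) c_ge0.
by rewrite !mul0r !add0r.
Qed.

Lemma maxfun_normr (f : T -> R) : maxfun e (fun u => `|f u|) = maxfun e f.
Proof.
apply: funext => v; congr sup; apply: eq_imagel => r _.
by rewrite /ball_avg; under eq_bigr do rewrite normr_id.
Qed.

Lemma continuous_maxfun v : continuous (fun g : {ptws T -> R} => maxfun e g v).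
Proof.
have -> : (fun g : {ptws T -> R} => maxfun e g v) =
    fun g => \big[Order.max/0]_(B in balls v) avg g B.
  by apply: funext => g; rewrite maxfun_bigmax.
apply: continuous_bigmax => B.
have cB : continuous (fun g : {ptws T -> R} => \sum_(u in B) `|g u|).
  apply: continuous_sumr => u g.
  exact: continuous_comp (@proj_continuous T (fun _ => R) u g) (@norm_continuous _ R^o _).
exact: continuousMl.
Qed.

End MaximalFunction.

Section Variation.
Variables (R : realType) (T : finType) (e : rel T) (p : R).
Hypothesis p_gt0 : 0 < p.

Lemma edge_diff_ge0 (g : T -> R) S : 0 <= edge_diff g S.
Proof. exact: bigmax_ge_id. Qed.

Lemma edge_diff_add_cst (g : T -> R) (c : R) S :
  edge_diff (fun x => g x + c) S = edge_diff g S.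
Proof.
apply: eq_bigr => x _; apply: eq_bigr => y _.
by rewrite opprD addrACA subrr addr0.
Qed.

Lemma edge_diff_scale (g : T -> R) (k : R) S : 0 <= k ->
  edge_diff (fun x => k * g x) S = k * edge_diff g S.
Proof.
move=> k_ge0.
have kmax : {morph (fun x => k * x) : a b / Order.max a b >-> Order.max a b}.
  by move=> a b /=; rewrite maxr_pMr.
rewrite /edge_diff (big_morph _ kmax (mulr0 k)); apply: eq_bigr => x _.
rewrite (big_morph _ kmax (mulr0 k)); apply: eq_bigr => y _.
by rewrite -mulrBr normrM ger0_norm.
Qed.

Lemma edge_diff_normr (g : T -> R) S :
  edge_diff (fun x => `|g x|) S <= edge_diff g S.
Proof.
by apply: le_bigmax2 => x _; apply: le_bigmax2 => y _; exact: ler_dist_dist.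
Qed.

Lemma edge_diff_cst (c : R) S : edge_diff (fun _ : T => c) S = 0.
Proof.
apply: bigmax_eq_id => x _; rewrite bigmax_le // => y _.
by rewrite subrr normr0.
Qed.

Lemma ler_dist_edge_diff (g : T -> R) x y : `|g x - g y| <= edge_diff g [set x; y].
Proof.
apply: (bigmax_sup x); first by rewrite !inE eqxx.
by apply: (bigmax_sup y); first by rewrite !inE eqxx orbT.
Qed.

Lemma Varp_ge0 (g : T -> R) : 0 <= Varp e p g.
Proof. exact: powR_ge0. Qed.

Lemma Varp_add_cst (g : T -> R) (c : R) : Varp e p (fun x => g x + c) = Varp e p g.
Proof. by rewrite /Varp; under eq_bigr do rewrite edge_diff_add_cst. Qed.

Lemma Varp_scale (g : T -> R) (k : R) : 0 <= k ->
  Varp e p (fun x => k * g x) = k * Varp e p g.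
Proof.
move=> k_ge0; rewrite /Varp.
under eq_bigr do rewrite edge_diff_scale// powRM ?edge_diff_ge0//.
rewrite -mulr_sumr powRM ?powR_ge0 ?sumr_ge0// => [|S _]; last exact: powR_ge0.
by rewrite -powRrM mulfV ?gt_eqF// powRr1.
Qed.

Lemma Varp_normr (g : T -> R) : Varp e p (fun x => `|g x|) <= Varp e p g.
Proof.
rewrite /Varp; apply: ge0_ler_powR.
- by rewrite invr_ge0 ltW.
- by rewrite nnegrE; apply: sumr_ge0 => S _; apply: powR_ge0.
- by rewrite nnegrE; apply: sumr_ge0 => S _; apply: powR_ge0.
apply: ler_sum => S _; apply: ge0_ler_powR.
- exact: ltW.
- by rewrite nnegrE edge_diff_ge0.
- by rewrite nnegrE edge_diff_ge0.
exact: edge_diff_normr.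
Qed.

Lemma Varp_cst (c : R) : Varp e p (fun _ : T => c) = 0.
Proof.
rewrite /Varp big1 ?powR0 ?invr_eq0 ?gt_eqF// => S _.
by rewrite edge_diff_cst powR0 ?gt_eqF.
Qed.

Lemma ler_dist_Varp (g : T -> R) x y : e x y -> `|g x - g y| <= Varp e p g.
Proof.
move=> exy; apply: le_trans (ler_dist_edge_diff g x y) _.
have xy_edge : is_edge e [set x; y].
  by apply/existsP; exists x; apply/existsP; exists y; rewrite eqxx exy.
set d := edge_diff g [set x; y].
have -> : d = (d `^ p) `^ p^-1 by rewrite -powRrM mulfV ?gt_eqF// powRr1 ?edge_diff_ge0.
rewrite /Varp; apply: ge0_ler_powR.
- by rewrite invr_ge0 ltW.
- by rewrite nnegrE powR_ge0.
- by rewrite nnegrE; apply: sumr_ge0 => S _; apply: powR_ge0.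
rewrite (bigD1 [set x; y]%SET) //= lerDl.
by apply: sumr_ge0 => S _; apply: powR_ge0.
Qed.

Lemma continuous_edge_diff (X : topologicalType) (G : X -> T -> R) S :
  (forall v, continuous (fun x => G x v)) ->
  continuous (fun x => edge_diff (G x) S).
Proof.
move=> cG; apply: continuous_bigmax => u; apply: continuous_bigmax => v x.
exact: (continuous_comp (cvgB (cG u x) (cG v x)) (@norm_continuous _ R^o _)).
Qed.

Lemma continuous_Varp (X : topologicalType) (G : X -> T -> R) :
  (forall v, continuous (fun x => G x v)) ->
  continuous (fun x => Varp e p (G x)).
Proof.
move=> cG.
have -> : (fun x => Varp e p (G x)) = fun x =>
    `|\sum_(S | is_edge e S) `|edge_diff (G x) S| `^ p| `^ p^-1.
  apply: funext => x; rewrite /Varp.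
  under [in RHS]eq_bigr => S _ do rewrite (ger0_norm (edge_diff_ge0 _ _)).
  by rewrite ger0_norm //; apply: sumr_ge0 => S _; apply: powR_ge0.
have csum : continuous (fun x => \sum_(S | is_edge e S) `|edge_diff (G x) S| `^ p).
  apply: continuous_sumr => S x.
  apply: (@continuous_comp _ _ _ (fun x => edge_diff (G x) S) (fun a : R => `|a| `^ p)).
    exact: continuous_edge_diff.
  exact: continuous_normr_powR.
have croot : continuous (fun a : R => `|a| `^ p^-1).
  by apply: continuous_normr_powR; rewrite invr_gt0.
by move=> x; exact: (continuous_comp (csum x) (croot _)).
Qed.

End Variation.

Lemma connect_short_path (T : finType) (e : rel T) (u v : T) : connect e u v ->
  exists s, [/\ path e u s, last u s = v & (size s <= #|T|)%N].
Proof.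
move=> /connectP [s e_s ->]; have [s' e_s' uniq_s' _] := shortenP e_s.
exists s'; split => //; apply: ltnW.
by have := max_card (mem (u :: s')); rewrite (card_uniqP uniq_s').
Qed.

Section ConnectedGraph.
Variables (R : realType) (T : finType) (e : rel T) (p : R).
Hypotheses (p_gt0 : 0 < p) (e_connected : connected_graph e).

Lemma path_le_Varp (g : T -> R) u s : path e u s ->
  g (last u s) <= g u + (size s)%:R * Varp e p g.
Proof.
elim: s u => [|w s IHs] u /=; first by rewrite mul0r addr0.
move=> /andP [e_uw e_s]; have := IHs w e_s.
have := ler_dist_Varp p_gt0 g e_uw; have := ler_norm (g w - g u).
rewrite distrC -addn1 natrD mulrDl mul1r; lra.
Qed.

Lemma connected_le_Varp (g : T -> R) u v : g v <= g u + #|T|%:R * Varp e p g.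
Proof.
have [s [e_s <- size_s]] := connect_short_path (e_connected u v).
apply: le_trans (path_le_Varp g e_s) _.
by rewrite lerD2l ler_wpM2r ?Varp_ge0 ?ler_nat.
Qed.

Lemma Varp_eq0_cst (g : T -> R) u v : Varp e p g = 0 -> g u = g v.
Proof.
move=> g_var; have g_le x y : g y <= g x.
  by have := connected_le_Varp g x y; rewrite g_var mulr0 addr0.
by apply/le_anti; rewrite !g_le.
Qed.

Lemma Varp_gt0 (g : T -> R) u v : g u != g v -> 0 < Varp e p g.
Proof.
by rewrite lt_def Varp_ge0 andbT; apply: contra => /eqP g_var; apply/eqP/Varp_eq0_cst.
Qed.

Lemma Varp_maxfun_eq0 (f : T -> R) :
  Varp e p (fun x => `|f x|) = 0 -> Varp e p (maxfun e f) = 0.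
Proof.
move=> f_var; rewrite -maxfun_normr.
have -> : maxfun e (fun x => `|f x|) = fun x => `|f x|.
  apply: funext => v; rewrite (_ : (fun x => `|f x|) = fun _ => `|f v|).
    by rewrite maxfun_cst.
  by apply: funext => x; apply: Varp_eq0_cst f_var.
exact: f_var.
Qed.

Definition normalized : set {ptws T -> R} :=
  [set g | forall v, `[0, #|T|%:R]%classic (g v)] `&` Varp e p @^-1` [set 1].

Lemma compact_normalized : compact normalized.
Proof.
apply: compact_closedI.
  exact: (@tychonoff T (fun _ => R) _ (fun _ => @segment_compact R 0 #|T|%:R)).
apply: preimage_closed; last exact: closed_eq.
move=> g _.
apply: (@continuous_Varp R T e p p_gt0 _ (fun g : {ptws T -> R} => g)) => v.
exact: (@proj_continuous T (fun _ => R) v).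
Qed.

Lemma normalized_shift_scale (a : T -> R) u : (forall v, a u <= a v) ->
  0 < Varp e p a -> normalized (fun x => (Varp e p a)^-1 * (a x - a u)).
Proof.
move=> u_min a_var; set g := fun x => _.
have g_var : Varp e p g = 1.
  by rewrite Varp_scale ?invr_ge0 ?(ltW a_var)// Varp_add_cst mulVf ?gt_eqF.
split => //= v; rewrite in_itv /= mulr_ge0 ?invr_ge0 ?(ltW a_var) ?subr_ge0 //=.
have := connected_le_Varp g u v.
by rewrite g_var /g subrr mulr0 add0r mulr1.
Qed.

Lemma ratio_le_normalized (f : T -> R) : 0 < Varp e p (fun x => `|f x|) ->
  exists2 g, normalized g &
    Varp e p (maxfun e f) / Varp e p f <= Varp e p (maxfun e g).
Proof.
set a := fun x => `|f x|; set l := Varp e p a; move=> l_gt0.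
case: (pickP (fun _ : T => true)) => [u0 _ | T_empty]; last first.
  suff a0 : a = fun _ => 0 by move: l_gt0; rewrite /l a0 (Varp_cst e p_gt0) ltxx.
  by apply: funext => x; have := T_empty x.
case: (@arg_minP _ _ _ u0 xpredT a isT) => u _ /(_ _ isT) u_min.
set g := fun x => l^-1 * (a x - a u).
have g_norm : normalized g := normalized_shift_scale u_min l_gt0.
have g_ge0 v : 0 <= g v by rewrite mulr_ge0 ?invr_ge0 ?subr_ge0 ?(ltW l_gt0).
exists g; first exact: g_norm.
have aE : a = fun x => l * g x + a u.
  by apply: funext => x; rewrite /g mulrA mulfV ?gt_eqF// mul1r subrK.
have -> : maxfun e f = fun v => l * maxfun e g v + a u.
  apply: funext => v; rewrite -maxfun_normr -/a {1}aE.
  by rewrite maxfun_affine; [| exact: g_ge0 | exact: ltW | exact: normr_ge0].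
rewrite Varp_add_cst (Varp_scale e p_gt0); last exact: ltW.
have l_le : l <= Varp e p f := Varp_normr e p_gt0 f.
have f_var : 0 < Varp e p f := lt_le_trans l_gt0 l_le.
rewrite (ler_pdivrMr _ _ f_var) [leLHS]mulrC.
by apply: ler_wpM2l l_le; exact: Varp_ge0.
Qed.

Lemma normalized_nonempty : (1 < #|T|)%N -> normalized !=set0.
Proof.
move=> /card_gt1P [x [y [_ _ x_neq_y]]].
pose f z : R := (z == y)%:R.
have f_var : 0 < Varp e p (fun z => `|f z|).
  apply: (@Varp_gt0 _ x y).
  by rewrite /f eqxx (negbTE x_neq_y) normr0 normr1 eq_sym oner_neq0.
by have [g g_norm _] := ratio_le_normalized f_var; exists g.
Qed.

End ConnectedGraph.

Theorem proposition4p1 (R : realType) (T : finType) (e : rel T) (p : R) :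
  simple_graph e -> connected_graph e -> (2 <= #|T|)%N -> 0 < p ->
  exists f : T -> R,
    [/\ (forall v, 0 <= f v), 0 < Varp e p f &
        ((Varp e p (maxfun e f)) / (Varp e p f))%:E = CGp e p].
Proof.
move=> _ e_conn T_gt1 p_gt0.
have F_cont : continuous (fun g : {ptws T -> R} => Varp e p (maxfun e g)).
  apply: (@continuous_Varp R T e p p_gt0 _ (fun g : {ptws T -> R} => maxfun e g)) => v.
  exact: continuous_maxfun.
have [gs] := compact_EVT_max (normalized_nonempty p_gt0 e_conn T_gt1)
  (compact_normalized p_gt0) (continuous_subspaceT F_cont).
move=> /set_mem [gs_range gs_var] gs_max.
exists gs; split.
- by move=> v; have := gs_range v; rewrite /= in_itv /= => /andP[].
- by rewrite gs_var; exact: ltr01.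
rewrite gs_var divr1; apply/le_anti/andP; split.
  apply: ereal_sup_ubound; exists gs => /=; first by rewrite gs_var; exact: ltr01.
  by rewrite gs_var divr1.
apply: ge_ereal_sup => _ [f _ <-]; rewrite lee_fin.
have [af_gt0 | af_le0] := ltrP 0 (Varp e p (fun x => `|f x|)).
  have [g g_norm /le_trans] := ratio_le_normalized p_gt0 e_conn af_gt0.
  by apply; apply: gs_max; exact: mem_set.
have af0 : Varp e p (fun x => `|f x|) = 0 by apply/le_anti; rewrite af_le0 Varp_ge0.
by rewrite (Varp_maxfun_eq0 p_gt0 e_conn af0) mul0r; exact: Varp_ge0.
Qed.
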